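(* Let $K>0$, $K\neq 1$, and let \[ A_2=\begin{pmatrix} K & 1 & 1\\ 1 & 1 & 1\\ 1 & 1 & 1\end{pmatrix},\qquad A_3=\begin{pmatrix} 1 & 1 & 1\\ 1 & K & K\\ 1 & K & K\end{pmatrix}. \] Then $A_2$ and $A_3$ have the same Sinkhorn limit \[ S(A_2)=S(A_3)=\begin{pmatrix} a & b & b\\ b & c & c\\ b & c & c\end{pmatrix} \] with \[ a=\frac{2K+1-\sqrt{8K+1}}{2(K-1)},\qquad b=\frac{-3+\sqrt{8K+1}}{4(K-1)},\qquad c=\frac{4K-1-\sqrt{8K+1}}{8(K-1)}. \]
   Context: For a positive $n\times n$ matrix $A$, the Sinkhorn limit $S(A)$ is the unique doubly stochastic matrix of the form $XAY$ with $X,Y$ positive diagonal matrices; it is the limit of alternately row scaling (dividing each row by its row sum) and column scaling (dividing each column by its column sum) starting from $A$. For a positive symmetric matrix $A$ there is a unique positive diagonal $X$ with $S(A)=XAX$. Both matrices are of the block form with first $k=1$ row $(M,B,B)$ and last $\ell=2$ rows $(B,N,N)$ with $MN/B^2=K$; the Sinkhorn limit of such a matrix depends only on $MN/B^2$. *)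

From HB Require Import structures.
From mathcomp Require Import all_boot all_order all_algebra.
Set Implicit Arguments. Unset Strict Implicit. Unset Printing Implicit Defensive.
Import Order.TTheory GRing.Theory Num.Theory.
Local Open Scope ring_scope.

Definition doubly_stochastic (R : numDomainType) (n : nat) (S : 'M[R]_n) : Prop :=
  (forall i j, 0 <= S i j) /\
  (forall i, \sum_(j < n) S i j = 1) /\
  (forall j, \sum_(i < n) S i j = 1).

(* For a positive A this characterizes the
   Sinkhorn limit S(A) (the paper's definition: "the unique doubly stochastic
   matrix of the form XAY"). *)
Definition sinkhorn_form (R : numDomainType) (n : nat) (A S : 'M[R]_n) : Prop :=
  doubly_stochastic S /\
  exists x y : 'I_n -> R,
    (forall i, 0 < x i) /\ (forall j, 0 < y j) /\
    (forall i j, S i j = x i * A i j * y j).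

Definition A2 (R : ringType) (K : R) : 'M[R]_3 :=
  \matrix_(i < 3, j < 3) (if (i == 0 :> nat) && (j == 0 :> nat) then K else 1).

Definition A3 (R : ringType) (K : R) : 'M[R]_3 :=
  \matrix_(i < 3, j < 3) (if (i == 0 :> nat) || (j == 0 :> nat) then 1 else K).

Definition blockM (R : ringType) (a b c : R) : 'M[R]_3 :=
  \matrix_(i < 3, j < 3)
    (if (i == 0 :> nat) && (j == 0 :> nat) then a
     else if (i == 0 :> nat) || (j == 0 :> nat) then b else c).

Definition sk_a (R : rcfType) (K : R) : R :=
  (2 * K + 1 - Num.sqrt (8 * K + 1)) / (2 * (K - 1)).
Definition sk_b (R : rcfType) (K : R) : R :=
  (- 3 + Num.sqrt (8 * K + 1)) / (4 * (K - 1)).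
Definition sk_c (R : rcfType) (K : R) : R :=
  (4 * K - 1 - Num.sqrt (8 * K + 1)) / (8 * (K - 1)).

From HB Require Import structures.
From mathcomp Require Import all_boot all_order all_algebra.
From mathcomp Require Import ring lra.
Set Implicit Arguments. Unset Strict Implicit. Unset Printing Implicit Defensive.
Import Order.TTheory GRing.Theory Num.Theory.
Local Open Scope ring_scope.

(* In [S = X A Y] two rows of [S] over equal rows of [A] are proportional, so
   if both sum to 1 they coincide; the same holds for columns.  For
   [A = blockM p q r] this makes [S] a doubly stochastic block matrix, which
   leaves a single parameter [b = S 0 1]: [S = blockM (1 - 2b) b ((1 - b)/2)].
   The cross ratio [S00 S11 / (S01 S10)] is invariant under diagonal scaling,
   hence equals [p r / q^2 = K], i.e. [(1 - 2b)(1 - b)/2 = K b^2].  Writing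
   [K = (s^2 - 1)/8] with [s = sqrt (8K + 1)] this factors as
   [((s - 3) b + 2) ((s + 3) b - 2) = 0], whose only root in (0, 1/2) is
   [b = 2/(s + 3)].  Conversely every positive block matrix with the right
   cross ratio is a diagonal scaling of [blockM p q r]. *)

Definition i0 : 'I_3 := @Ordinal 3 0 isT.
Definition i1 : 'I_3 := @Ordinal 3 1 isT.
Definition i2 : 'I_3 := @Ordinal 3 2 isT.

Lemma big_ord3 (V : nmodType) (F : 'I_3 -> V) : \sum_(j < 3) F j = F i0 + F i1 + F i2.
Proof.
rewrite !big_ord_recl big_ord0 addr0 addrA; congr (F _ + F _ + F _); exact: val_inj.
Qed.

Lemma ord3_ind (P : 'I_3 -> Prop) : P i0 -> P i1 -> P i2 -> forall i, P i.
Proof.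
move=> P0 P1 P2 [[|[|[|//]]] lt_i3].
- by rewrite (_ : Ordinal lt_i3 = i0) //; apply: val_inj.
- by rewrite (_ : Ordinal lt_i3 = i1) //; apply: val_inj.
- by rewrite (_ : Ordinal lt_i3 = i2) //; apply: val_inj.
Qed.

Lemma scaled_cross_ratio (R : comPzRingType) n (A S : 'M[R]_n) (x y : 'I_n -> R) :
  (forall i j, S i j = x i * A i j * y j) ->
  forall i k j l, S i j * S k l * (A i l * A k j) = S i l * S k j * (A i j * A k l).
Proof. by move=> SE i k j l; rewrite !SE; ring. Qed.

Lemma scaled_rows_eq (R : fieldType) n (A S : 'M[R]_n) (x y : 'I_n -> R) i k :
  (forall i j, S i j = x i * A i j * y j) -> x i != 0 -> (forall j, A i j = A k j) ->
  \sum_j S i j = 1 -> \sum_j S k j = 1 -> forall j, S i j = S k j.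
Proof.
move=> SE xi_neq0 eqA sumi sumk.
have Sk j : S k j = x k / x i * S i j by rewrite !SE eqA; field.
have ratio1 : x k / x i = 1.
  by rewrite -sumk (eq_bigr _ (fun j _ => Sk j)) -big_distrr /= sumi mulr1.
by move=> j; rewrite Sk ratio1 mul1r.
Qed.

Lemma scaled_cols_eq (R : fieldType) n (A S : 'M[R]_n) (x y : 'I_n -> R) j l :
  (forall i j, S i j = x i * A i j * y j) -> y j != 0 -> (forall i, A i j = A i l) ->
  \sum_i S i j = 1 -> \sum_i S i l = 1 -> forall i, S i j = S i l.
Proof.
move=> SE yj_neq0 eqA sumj suml i.
have SEt i' j' : S^T i' j' = y i' * A^T i' j' * x j' by rewrite !mxE SE; ring.
suff /(_ i) : forall i, S^T j i = S^T l i by rewrite !mxE.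
apply: (scaled_rows_eq SEt yj_neq0) => [i'||].
- by rewrite !mxE.
- by rewrite -sumj; apply: eq_bigr => i' _; rewrite mxE.
- by rewrite -suml; apply: eq_bigr => i' _; rewrite mxE.
Qed.

Lemma blockM_gt0 (R : numDomainType) (p q r : R) :
  0 < p -> 0 < q -> 0 < r -> forall i j, 0 < blockM p q r i j.
Proof. by move=> p_gt0 q_gt0 r_gt0 i j; rewrite mxE; case: ifP => _ //; case: ifP. Qed.

Lemma doubly_stochastic_blockE (R : realFieldType) (S : 'M[R]_3) :
  (forall j, S i1 j = S i2 j) -> (forall i, S i i1 = S i i2) -> doubly_stochastic S ->
  S = blockM (1 - 2 * S i0 i1) (S i0 i1) ((1 - S i0 i1) / 2).
Proof.
move=> rows12 cols12 [_ [rows cols]].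
move: (rows i0) (rows i1) (cols i0); rewrite !big_ord3 => row0 row1 col0.
move: (rows12 i0) (rows12 i1) (rows12 i2) (cols12 i0) (cols12 i1) => *.
by apply/matrixP; apply: ord3_ind; apply: ord3_ind; rewrite mxE /=; lra.
Qed.

Lemma blockM_doubly_stochastic (R : realFieldType) (b : R) :
  0 <= b -> 0 <= 1 - 2 * b -> doubly_stochastic (blockM (1 - 2 * b) b ((1 - b) / 2)).
Proof.
move=> b_ge0 a_ge0; split; [|split].
- by apply: ord3_ind; apply: ord3_ind; rewrite mxE /=; lra.
- by apply: ord3_ind; rewrite big_ord3 !mxE /=; field.
- by apply: ord3_ind; rewrite big_ord3 !mxE /=; field.
Qed.

Lemma blockM_scaled (R : realFieldType) (a b c p q r : R) :
  0 < a -> 0 < b -> 0 < p -> 0 < q -> a * c * q ^+ 2 = b ^+ 2 * (p * r) ->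
  exists x y : 'I_3 -> R, (forall i, 0 < x i) /\ (forall j, 0 < y j) /\
    (forall i j, blockM a b c i j = x i * blockM p q r i j * y j).
Proof.
move=> a_gt0 b_gt0 p_gt0 q_gt0 cross.
have [a_neq0 p_neq0 q_neq0] := And3 (lt0r_neq0 a_gt0) (lt0r_neq0 p_gt0) (lt0r_neq0 q_gt0).
have cE : c = b ^+ 2 * (p * r) / (a * q ^+ 2) by rewrite -cross; field; rewrite q_neq0 a_neq0.
exists (fun i => if val i == 0%N then a / p else b / q).
exists (fun j => if val j == 0%N then 1 else b * p / (a * q)).
split; [|split].
- by move=> i; case: ifP => _; rewrite divr_gt0.
- by move=> j; case: ifP => _; rewrite ?ltr01 // divr_gt0 ?mulr_gt0.
- apply: ord3_ind; apply: ord3_ind; rewrite !mxE /= ?cE; field.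
  all: by rewrite ?a_neq0 ?p_neq0 ?q_neq0.
Qed.

Lemma sinkhorn_form_blockM (R : realFieldType) (K p q r : R) (S : 'M[R]_3) :
  0 < p -> 0 < q -> 0 < r -> p * r = K * q ^+ 2 ->
  sinkhorn_form (blockM p q r) S <->
  exists2 b, [/\ 0 < b, 0 < 1 - 2 * b & (1 - 2 * b) * ((1 - b) / 2) = K * b ^+ 2]
           & S = blockM (1 - 2 * b) b ((1 - b) / 2).
Proof.
move=> p_gt0 q_gt0 r_gt0 prE; split.
- move=> [dsS [x [y [x_gt0 [y_gt0 SE]]]]].
  have [_ [rows cols]] := dsS.
  have rows12 : forall j, S i1 j = S i2 j.
    by apply: (scaled_rows_eq SE _ _ (rows i1) (rows i2)) => [|j]; rewrite ?lt0r_neq0 ?mxE.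
  have cols12 : forall i, S i i1 = S i i2.
    by apply: (scaled_cols_eq SE _ _ (cols i1) (cols i2)) => [|i]; rewrite ?lt0r_neq0 ?mxE.
  have S_gt0 i j : 0 < S i j by rewrite SE !mulr_gt0 ?blockM_gt0.
  have SE' := doubly_stochastic_blockE rows12 cols12 dsS.
  have S00 : S i0 i0 = 1 - 2 * S i0 i1 by rewrite {1}SE' mxE.
  have S10 : S i1 i0 = S i0 i1 by rewrite {1}SE' mxE.
  have S11 : S i1 i1 = (1 - S i0 i1) / 2 by rewrite {1}SE' mxE.
  exists (S i0 i1) => //; split; [exact: S_gt0 | by rewrite -S00 |].
  have := scaled_cross_ratio SE i0 i1 i0 i1.
  rewrite S00 S10 S11 !mxE /= => cross.
  apply: (mulIf (lt0r_neq0 (exprn_gt0 2 q_gt0))).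
  by rewrite (expr2 q) cross prE; ring.
- move=> [b [b_gt0 a_gt0 eqb] ->]; split.
    by apply: blockM_doubly_stochastic; rewrite ltW.
  by apply: blockM_scaled => //; rewrite eqb prE; ring.
Qed.

Lemma sk_sqrt_param (R : rcfType) (K : R) : 0 < K -> K != 1 ->
  exists2 s, 1 < s & [/\ K = (s ^+ 2 - 1) / 8, sk_a K = (s - 1) / (s + 3),
                         sk_b K = 2 / (s + 3) & sk_c K = (s + 1) / (2 * (s + 3))].
Proof.
move=> K_gt0 K_neq1; rewrite /sk_a /sk_b /sk_c.
set s := Num.sqrt (8 * K + 1).
have s_sqr : s ^+ 2 = 8 * K + 1 by rewrite sqr_sqrtr //; lra.
have s_gt1 : 1 < s by rewrite -[X in X < _]sqrtr1 ltr_sqrt; lra.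
have KE : K = (s ^+ 2 - 1) / 8 by rewrite s_sqr; field.
have s3_neq0 : s + 3 != 0 by rewrite gt_eqF //; lra.
have s2_neq9 : s ^+ 2 - 1 - 8 != 0.
  apply: contra K_neq1 => /eqP s2_9; apply/eqP; rewrite KE; lra.
exists s => //; rewrite KE; split=> //; field; by rewrite s3_neq0 s2_neq9.
Qed.

Lemma sk_aE (R : rcfType) (K : R) : 0 < K -> K != 1 -> sk_a K = 1 - 2 * sk_b K.
Proof.
move=> K_gt0 K_neq1; have [s s_gt1 [_ -> -> _]] := sk_sqrt_param K_gt0 K_neq1.
by field; rewrite gt_eqF //; lra.
Qed.

Lemma sk_cE (R : rcfType) (K : R) : 0 < K -> K != 1 -> sk_c K = (1 - sk_b K) / 2.
Proof.
move=> K_gt0 K_neq1; have [s s_gt1 [_ _ -> ->]] := sk_sqrt_param K_gt0 K_neq1.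
by field; rewrite gt_eqF //; lra.
Qed.

Lemma sk_bP (R : rcfType) (K b : R) : 0 < K -> K != 1 ->
  [/\ 0 < b, 0 < 1 - 2 * b & (1 - 2 * b) * ((1 - b) / 2) = K * b ^+ 2] <-> b = sk_b K.
Proof.
move=> K_gt0 K_neq1; have [s s_gt1 [KE _ -> _]] := sk_sqrt_param K_gt0 K_neq1.
have s3_gt0 : 0 < s + 3 by lra.
split=> [[b_gt0 a_gt0 root] | ->].
- have : ((s - 3) * b + 2) * ((s + 3) * b - 2) =
         -8 * ((1 - 2 * b) * ((1 - b) / 2) - K * b ^+ 2) by rewrite KE; field.
  rewrite root subrr mulr0 => factored.
  have other_root_neq0 : (s - 3) * b + 2 != 0.
    rewrite (_ : _ + 2 = (s - 1) * b + (1 - 2 * b) + 1); last by ring.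
    by rewrite gt_eqF // addr_gt0 // addr_gt0 // mulr_gt0 // subr_gt0.
  move/eqP: factored; rewrite mulf_eq0 (negbTE other_root_neq0) subr_eq0 /= => /eqP <-.
  by field; rewrite lt0r_neq0.
- split; rewrite ?divr_gt0 //.
    by rewrite (_ : _ - _ = (s - 1) / (s + 3)) ?divr_gt0 ?subr_gt0 //; field; rewrite lt0r_neq0.
  by rewrite KE; field; rewrite lt0r_neq0.
Qed.

Lemma sinkhorn_form_blockM_sk (R : rcfType) (K p q r : R) (S : 'M[R]_3) :
  0 < K -> K != 1 -> 0 < p -> 0 < q -> 0 < r -> p * r = K * q ^+ 2 ->
  sinkhorn_form (blockM p q r) S <-> S = blockM (sk_a K) (sk_b K) (sk_c K).
Proof.
move=> K_gt0 K_neq1 p_gt0 q_gt0 r_gt0 prE.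
rewrite (sinkhorn_form_blockM _ p_gt0 q_gt0 r_gt0 prE) (sk_aE K_gt0 K_neq1) (sk_cE K_gt0 K_neq1).
split=> [[b /(sk_bP _ K_gt0 K_neq1) -> //] | ->].
by exists (sk_b K); first exact/sk_bP.
Qed.

Lemma A2E (R : nzRingType) (K : R) : A2 K = blockM K 1 1.
Proof. by apply/matrixP => i j; rewrite !mxE; case: eqP; case: eqP. Qed.

Lemma A3E (R : nzRingType) (K : R) : A3 K = blockM 1 1 K.
Proof. by apply/matrixP => i j; rewrite !mxE; case: eqP; case: eqP. Qed.

Theorem mainTheorem8 (R : rcfType) (K : R) (hK0 : 0 < K) (hK1 : K != 1) :
  (forall S : 'M[R]_3, sinkhorn_form (A2 K) S <-> S = blockM (sk_a K) (sk_b K) (sk_c K)) /\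
  (forall S : 'M[R]_3, sinkhorn_form (A3 K) S <-> S = blockM (sk_a K) (sk_b K) (sk_c K)).
Proof.
split=> S; [rewrite A2E | rewrite A3E]; apply: sinkhorn_form_blockM_sk; rewrite ?ltr01 //; ring.
Qed.
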